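(* Let $T$ be a torus, $X$ a finite $T$-CW complex, $(t,x)\in\mathcal X^+\times\mathfrak t_{\mathbb C}$ and $a=\zeta_{T,t}(x)\in E_{T,t}$. Evaluation of loops at $(0,0)\in\mathbb T^2$ restricts to a homeomorphism \[ ev_{t,x}:L^2X^{t,x}\xrightarrow{\cong}X^a, \] natural in $X$ and equivariant with respect to the homomorphism $\nu:T/T(a)\to(\mathbb T^2\times T)/T(t,x)$ induced by the inclusion $T\hookrightarrow\mathbb T^2\times T$, $u\mapsto(0,u)$ (i.e. $ev_{t,x}(\nu(g)\cdot\gamma)=g\cdot ev_{t,x}(\gamma)$).
   Context: $\mathbb T=\mathbb R/\mathbb Z$, $T$ torus, $\check T=\mathrm{Hom}(\mathbb T,T)$, $\mathfrak t=\check T\otimes\mathbb R$, $\mathfrak t_{\mathbb C}=\check T\otimes\mathbb C$, $\pi:\mathfrak t\to T$ the quotient. $\mathcal X^+=\{(t_1,t_2)\in\mathbb C^2:\mathbb Rt_1+\mathbb Rt_2=\mathbb C,\ \mathrm{Im}(t_1/t_2)>0\}$, $E_t=\mathbb C/(\mathbb Zt_1+\mathbb Zt_2)$, $E_{T,t}=\check T\otimes E_t$, $\zeta_{T,t}:\mathfrak t_{\mathbb C}\to E_{T,t}$ the quotient. For $a\in E_{T,t}$, $T(a)$ is the intersection of all closed $H\subset T$ with $a\in\mathrm{Hom}(\hat H,E_t)\subset E_{T,t}$ (explicitly, writing $x=x_1t_1+x_2t_2$ with $x_i\in\mathfrak t$, $T(a)$ is generated by $\pi(x_1),\pi(x_2)$),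 and $X^a$ is its fixed point set. $L^2X=\mathrm{Map}(\mathbb T^2,X)$ with $\mathbb T^2\times T$ acting by $((r,u)\cdot\gamma)(s)=u\cdot\gamma(s-r)$. $T(t,x)$ is the intersection of all closed $K\subset\mathbb T^2\times T$ with $(t,x)\in\mathrm{Lie}(K)\otimes\mathbb C\subset\mathbb C^2\times\mathfrak t_{\mathbb C}$, and $L^2X^{t,x}$ is its fixed point set; one has $T(a)=T\cap T(t,x)$, so $\nu$ is well defined. $L^2X^{t,x}$ carries the induced action of $(\mathbb T^2\times T)/T(t,x)$ and $X^a$ that of $T/T(a)$. *)

From HB Require Import structures.
From mathcomp Require Import all_boot all_order all_algebra.
From mathcomp Require Import all_classical all_reals all_analysis.
From mathcomp Require Import Rstruct Rstruct_topology.
From mathcomp.real_closed Require Import complex.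

Set Implicit Arguments.
Unset Strict Implicit.
Unset Printing Implicit Defensive.

Import Order.TTheory GRing.Theory Num.Theory.
Local Open Scope classical_set_scope.
Local Open Scope ring_scope.
Local Open Scope complex_scope.

Notation RR := Rdefinitions.R.
Notation CC := (Rdefinitions.R[i]).

(** A torus of rank n is T = t / Tcheck with t = R^n and
    Tcheck = Z^n; so 𝕋 = R/Z, 𝕋^2 = R^2/Z^2, t_C = C^n.  Everything
    concerning T is expressed through lifts along the quotient map
    pi : R^n -> T (an open surjective homomorphism):
    - a continuous T-action on X is a continuous R^n-action on X that is
      trivial on Z^n;
    - a closed subgroup H of T is represented by its (closed) preimage in
      R^n, i.e. a closed subgroup of R^n containing Z^n;
    - a loop  T^2 -> X  is a continuous Z^2-periodic map  R^2 -> X. *)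

Definition integral_vec m (k : 'rV[RR]_m) : Prop :=
  forall i, k 0 i \is a Num.int.

Definition torus_action n (X : topologicalType) (act : 'rV[RR]_n -> X -> X)
  : Prop :=
  [/\ continuous (fun p : 'rV[RR]_n * X => act p.1 p.2),
      forall p, act 0 p = p,
      forall u v p, act (u + v) p = act u (act v p)
    & forall k p, integral_vec k -> act k p = p].

Definition torus_subgroup n (H : set 'rV[RR]_n) : Prop :=
  [/\ closed H,
      forall k, integral_vec k -> H k
    & forall u v, H u -> H v -> H (u - v)].

Definition torus2_subgroup n (K : set ('rV[RR]_2 * 'rV[RR]_n)) : Prop :=
  [/\ closed K,
      forall r u, integral_vec r -> integral_vec u -> K (r, u)
    & forall a b, K a -> K b -> K (a.1 - b.1, a.2 - b.2)].

Definition lie2 n (K : set ('rV[RR]_2 * 'rV[RR]_n)) (w : 'rV[RR]_2 * 'rV[RR]_n)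
  : Prop := forall c : RR, K (c *: w.1, c *: w.2).

Definition t1 (t : 'rV[CC]_2) : CC := t 0 ord0.
Definition t2 (t : 'rV[CC]_2) : CC := t 0 ord_max.

(** (t, x) lies in Lie(K) ⊗ C  (= Lie(K) + i Lie(K) inside C^2 x C^n) *)
Definition in_lieC n (K : set ('rV[RR]_2 * 'rV[RR]_n))
  (t : 'rV[CC]_2) (x : 'rV[CC]_n) : Prop :=
  exists v w, [/\ lie2 K v, lie2 K w,
    forall j, t 0 j = Complex (v.1 0 j) (w.1 0 j)
  & forall k, x 0 k = Complex (v.2 0 k) (w.2 0 k)].

Definition Xplus (t : 'rV[CC]_2) : Prop :=
  (forall z : CC, exists a b : RR, z = a%:C * t1 t + b%:C * t2 t)
  /\ 0 < complex.Im (t1 t / t2 t).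

Definition decomp n (t : 'rV[CC]_2) (x : 'rV[CC]_n) (x1 x2 : 'rV[RR]_n) : Prop :=
  forall k, x 0 k = (x1 0 k)%:C * t1 t + (x2 0 k)%:C * t2 t.

(** (preimage in R^n of) T(a), a = zeta_{T,t}(x): the closed subgroup of T
    generated by pi(x1), pi(x2) *)
Definition Ta n (t : 'rV[CC]_2) (x : 'rV[CC]_n) : set 'rV[RR]_n :=
  [set u | forall H, torus_subgroup H ->
     (forall x1 x2, decomp t x x1 x2 -> H x1 /\ H x2) -> H u].

Definition Ttx n (t : 'rV[CC]_2) (x : 'rV[CC]_n)
  : set ('rV[RR]_2 * 'rV[RR]_n) :=
  [set p | forall K, torus2_subgroup K -> in_lieC K t x -> K p].

Definition fixed_pts n (X : Type) (act : 'rV[RR]_n -> X -> X)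
  (S : set 'rV[RR]_n) : set X :=
  [set p | forall u, S u -> act u p = p].

Definition loopT (X : topologicalType) := {compact-open, 'rV[RR]_2 -> X}.

Definition L2 (X : topologicalType) : set (loopT X) :=
  [set g | continuous (g : 'rV[RR]_2 -> X) /\
           forall s k, integral_vec k -> g (s + k) = g s].

Definition loop_act n (X : topologicalType) (act : 'rV[RR]_n -> X -> X)
  (p : 'rV[RR]_2 * 'rV[RR]_n) (g : loopT X) : loopT X :=
  fun s => act p.2 (g (s - p.1)).

Definition L2fix n (X : topologicalType) (act : 'rV[RR]_n -> X -> X)
  (t : 'rV[CC]_2) (x : 'rV[CC]_n) : set (loopT X) :=
  [set g | L2 g /\ forall p, Ttx t x p -> loop_act act p g = g].

Definition ev (X : topologicalType) (g : loopT X) : X := g 0.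

(** closed / open cells (the cube [-1,1]^d, homeomorphic to D^d) *)
Definition closed_cell d : set 'rV[RR]_d := [set v | `|v| <= 1].
Definition open_cell d : set 'rV[RR]_d := [set v | `|v| < 1].

(** finite T-CW complex: Hausdorff T-space with finitely many equivariant
    cells  T/H_i x D^{d_i} -> X  (characteristic maps, lifted to
    R^n x D^{d_i}), whose open cells partition X, each characteristic map
    being injective on T/H_i x int D^{d_i}, and the boundary of every cell
    lying in the union of cells of strictly smaller dimension. *)
Definition finite_TCW n (X : topologicalType) (act : 'rV[RR]_n -> X -> X)
  : Prop :=
  [/\ torus_action act, hausdorff_space X &
  exists (m : nat) (d : 'I_m -> nat) (H : 'I_m -> set 'rV[RR]_n)
         (Phi : forall i : 'I_m, 'rV[RR]_n * 'rV[RR]_(d i) -> X),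
  [/\ forall i, torus_subgroup (H i),
      forall i, {within [set p | closed_cell p.2], continuous (Phi i)},
      forall i u s v, Phi i (u + s, v) = act u (Phi i (s, v)),
      forall i s s' v, closed_cell v -> H i (s - s') -> Phi i (s, v) = Phi i (s', v)
    & [/\ forall i s s' v v', open_cell v -> open_cell v' ->
        Phi i (s, v) = Phi i (s', v') -> v = v' /\ H i (s - s'),
      forall i j s s' v v', i != j -> open_cell v -> open_cell v' ->
        Phi i (s, v) <> Phi j (s', v'),
      forall p, exists i s v, open_cell v /\ p = Phi i (s, v)
    & forall i s v, `|v| = 1 -> exists j s' v',
        [/\ (d j < d i)%N, open_cell v' & Phi i (s, v) = Phi j (s', v')]]]].

From HB Require Import structures.
From mathcomp Require Import all_boot all_order all_algebra.
From mathcomp Require Import all_classical all_reals all_analysis.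
From mathcomp Require Import Rstruct Rstruct_topology.
From mathcomp.real_closed Require Import complex.
From mathcomp Require Import ring.
Import Order.TTheory GRing.Theory Num.Theory.
Local Open Scope classical_set_scope.
Local Open Scope ring_scope.

Set Implicit Arguments.
Unset Strict Implicit.
Unset Printing Implicit Defensive.

(* Write x = x1 t1 + x2 t2 with x1, x2 real and let L r := r1 x1 + r2 x2.
   As t1, t2 span C over R, the real and imaginary parts of (t, x) span the
   graph of L, so T(t, x) contains every (r, L r).  Conversely
   {(r, u) | u - L r in T(a)} is a closed subgroup whose Lie algebra contains
   (t, x), hence contains T(t, x).  Therefore a loop fixed by T(t, x) is
   s |-> L s . g(0) with g(0) fixed by L(Z^2) = <x1, x2>, and T(a) is the
   closed subgroup they generate; conversely s |-> L s . p is such a loop for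
   every p in X^a, and it depends continuously on p by currying.
   Equivariance is naturality applied to u . -, which is equivariant because
   T is abelian. *)

Lemma surj2_transpose (F : fieldType) (p q r s : F) :
  (forall u1 u2, exists a b, a * p + b * q = u1 /\ a * r + b * s = u2) ->
  forall c1 c2, exists a b, a * p + b * r = c1 /\ a * q + b * s = c2.
Proof.
move=> surj c1 c2.
have [a [b [e1 e2]]] := surj 1 0; have [c [d [e3 e4]]] := surj 0 1.
have det_inv : (p * s - q * r) * (a * d - b * c) = 1.
  transitivity ((a * p + b * q) * (c * r + d * s) - (a * r + b * s) * (c * p + d * q)).
    by ring.
  by rewrite e1 e2 e3 e4 mulr1 mul0r subr0.
have det_neq0 : p * s - q * r != 0.
  by apply: contra_eq_neq det_inv => ->; rewrite mul0r eq_sym oner_neq0.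
(* Cramer's rule *)
exists ((c1 * s - c2 * r) / (p * s - q * r)), ((c2 * p - c1 * q) / (p * s - q * r)).
by split; field.
Qed.

Lemma Re_real_comb (a b : RR) (z w : CC) :
  complex.Re (a%:C * z + b%:C * w)%C = a * complex.Re z + b * complex.Re w.
Proof. by case: z w => p r [q s]; simpc. Qed.

Lemma Im_real_comb (a b : RR) (z w : CC) :
  complex.Im (a%:C * z + b%:C * w)%C = a * complex.Im z + b * complex.Im w.
Proof. by case: z w => p r [q s]; simpc. Qed.

Definition lincomb n (x1 x2 : 'rV[RR]_n) (r : 'rV[RR]_2) : 'rV[RR]_n :=
  r 0 ord0 *: x1 + r 0 ord_max *: x2.

Fact lincomb_is_linear n (x1 x2 : 'rV[RR]_n) : linear (lincomb x1 x2).
Proof.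
by move=> c r r'; rewrite /lincomb !mxE !scalerDl -!scalerA addrACA scalerDr.
Qed.

HB.instance Definition _ n (x1 x2 : 'rV[RR]_n) :=
  GRing.isLinear.Build RR 'rV[RR]_2 'rV[RR]_n _ (lincomb x1 x2)
    (lincomb_is_linear x1 x2).

Lemma lincomb_continuous n (x1 x2 : 'rV[RR]_n) : continuous (lincomb x1 x2).
Proof.
move=> r; apply: (@continuousD RR 'rV[RR]_n 'rV[RR]_2
  (fun r => r 0 ord0 *: x1) (fun r => r 0 ord_max *: x2) r);
  exact/continuousZr_tmp/coord_continuous.
Qed.

Lemma lincomb_delta0 n (x1 x2 : 'rV[RR]_n) : lincomb x1 x2 (delta_mx 0 ord0) = x1.
Proof. by rewrite /lincomb !mxE /= scale1r scale0r addr0. Qed.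

Lemma lincomb_delta1 n (x1 x2 : 'rV[RR]_n) : lincomb x1 x2 (delta_mx 0 ord_max) = x2.
Proof. by rewrite /lincomb !mxE /= scale1r scale0r add0r. Qed.

Lemma integral_vec0 m : integral_vec (0 : 'rV[RR]_m).
Proof. by move=> i; rewrite mxE rpred0. Qed.

Lemma integral_vec_delta m (j : 'I_m) : integral_vec (delta_mx 0 j).
Proof. by move=> i; rewrite mxE; case: (_ && _); [exact: rpred1 | exact: rpred0]. Qed.

Section TorusSubgroup.
Variables (n : nat) (H : set 'rV[RR]_n).
Hypothesis H_subgroup : torus_subgroup H.

Lemma torus_subgroup0 : H 0.
Proof. by case: H_subgroup => _ Hint _; apply/Hint/integral_vec0. Qed.

Lemma torus_subgroupB u v : H u -> H v -> H (u - v).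
Proof. by case: H_subgroup => _ _; apply. Qed.

Lemma torus_subgroupN u : H u -> H (- u).
Proof. by rewrite -sub0r; apply/torus_subgroupB/torus_subgroup0. Qed.

Lemma torus_subgroupD u v : H u -> H v -> H (u + v).
Proof. by move=> Hu /torus_subgroupN Hv; rewrite -[v]opprK; apply: torus_subgroupB. Qed.

Lemma torus_subgroupMz u m : H u -> H (u *~ m).
Proof.
move=> Hu; have Hmuln k : H (u *+ k).
  elim: k => [|k IHk]; first by rewrite mulr0n; exact: torus_subgroup0.
  by rewrite mulrS; apply: torus_subgroupD.
by case: m => k; [exact: Hmuln | rewrite NegzE mulrNz; exact/torus_subgroupN/Hmuln].
Qed.

Lemma torus_subgroup_lincomb x1 x2 r :
  H x1 -> H x2 -> integral_vec r -> H (lincomb x1 x2 r).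
Proof.
move=> H1 H2 r_int; rewrite /lincomb.
have /intrP [m1 ->] := r_int ord0; have /intrP [m2 ->] := r_int ord_max.
by rewrite !scaler_int; apply: torus_subgroupD; apply: torus_subgroupMz.
Qed.

End TorusSubgroup.

Lemma torus2_subgroupD n (K : set ('rV[RR]_2 * 'rV[RR]_n)) a b :
  torus2_subgroup K -> K a -> K b -> K (a.1 + b.1, a.2 + b.2).
Proof.
case=> _ Kint Ksub Ka Kb.
have K0 : K (0, 0) by apply: Kint; exact: integral_vec0.
by have := Ksub a _ Ka (Ksub _ b K0 Kb); rewrite /= !sub0r !opprK.
Qed.

Lemma torus2_subgroup_lie2 n (K : set ('rV[RR]_2 * 'rV[RR]_n)) v w (a b : RR) :
  torus2_subgroup K -> lie2 K v -> lie2 K w ->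
  K (a *: v.1 + b *: w.1, a *: v.2 + b *: w.2).
Proof. by move=> K_subgroup Kv Kw; apply: torus2_subgroupD (Kv a) (Kw b). Qed.

Definition re_row m (z : 'rV[CC]_m) : 'rV[RR]_m := \row_k complex.Re (z 0 k).
Definition im_row m (z : 'rV[CC]_m) : 'rV[RR]_m := \row_k complex.Im (z 0 k).

Lemma in_lieC_ReIm n (K : set ('rV[RR]_2 * 'rV[RR]_n)) t x :
  in_lieC K t x <-> lie2 K (re_row t, re_row x) /\ lie2 K (im_row t, im_row x).
Proof.
split=> [[[v1 v2] [[w1 w2] [Kv Kw /= vwt vwx]]] | [Kre Kim]].
  have -> : (re_row t, re_row x) = (v1, v2).
    by congr (_, _); apply/rowP => k; rewrite mxE ?vwt ?vwx.
  have -> : (im_row t, im_row x) = (w1, w2).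
    by congr (_, _); apply/rowP => k; rewrite mxE ?vwt ?vwx.
  by [].
exists (re_row t, re_row x), (im_row t, im_row x).
by split=> // k; rewrite !mxE; case: (_ 0 k).
Qed.

Section Decomposition.
Variables (n : nat) (t : 'rV[CC]_2) (x : 'rV[CC]_n) (x1 x2 : 'rV[RR]_n).
Hypothesis x_decomp : decomp t x x1 x2.

Lemma decomp_re_row : re_row x = lincomb x1 x2 (re_row t).
Proof. by apply/rowP => k; rewrite /lincomb !mxE x_decomp Re_real_comb; ring. Qed.

Lemma decomp_im_row : im_row x = lincomb x1 x2 (im_row t).
Proof. by apply/rowP => k; rewrite /lincomb !mxE x_decomp Im_real_comb; ring. Qed.

End Decomposition.

Lemma Xplus_decomp n (t : 'rV[CC]_2) (x : 'rV[CC]_n) :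
  Xplus t -> exists x1 x2, decomp t x x1 x2.
Proof.
move=> [span _]; have [a ha] := boolp.choice (fun k => span (x 0 k)).
have [b hb] := boolp.choice ha.
by exists (\row_k a k), (\row_k b k) => k; rewrite !mxE; exact: hb.
Qed.

Lemma Xplus_span (t : 'rV[CC]_2) :
  Xplus t -> forall r, exists a b : RR, a *: re_row t + b *: im_row t = r.
Proof.
move=> [span _] r.
have surj u1 u2 : exists a b : RR,
    a * complex.Re (t1 t) + b * complex.Re (t2 t) = u1 /\
    a * complex.Im (t1 t) + b * complex.Im (t2 t) = u2.
  have [a [b e]] := span (Complex u1 u2).
  by exists a, b; rewrite -Re_real_comb -Im_real_comb -e.
have [a [b [e1 e2]]] := surj2_transpose surj (r 0 ord0) (r 0 ord_max).
exists a, b; apply/rowP => j; rewrite !mxE.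
have j_cases : j = ord0 \/ j = ord_max.
  by case: j => -[|[|//]] ?; [left | right]; apply: val_inj.
by case: j_cases => ->.
Qed.

Lemma Ta_torus_subgroup n (t : 'rV[CC]_2) (x : 'rV[CC]_n) : torus_subgroup (Ta t x).
Proof.
split.
- rewrite (_ : Ta t x = \bigcap_(H in [set H | torus_subgroup H /\
      forall x1 x2, decomp t x x1 x2 -> H x1 /\ H x2]) H).
    by apply: closed_bigI => H [[]].
  by apply/seteqP; split=> u Tu H; [case; apply: Tu | move=> *; apply: Tu].
- by move=> k k_int H [_ Hint _] _; apply: Hint.
- by move=> u v Tu Tv H H_subgroup Hx; apply: torus_subgroupB; [|apply: Tu|apply: Tv].
Qed.

Lemma Ta_decomp n (t : 'rV[CC]_2) (x : 'rV[CC]_n) x1 x2 :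
  decomp t x x1 x2 -> Ta t x x1 /\ Ta t x x2.
Proof. by move=> x_decomp; split=> H _ /(_ _ _ x_decomp) []. Qed.

Lemma Ttx_graph n (t : 'rV[CC]_2) (x : 'rV[CC]_n) x1 x2 :
  Xplus t -> decomp t x x1 x2 -> forall r, Ttx t x (r, lincomb x1 x2 r).
Proof.
move=> tX x_decomp r K K_subgroup /in_lieC_ReIm [Kre Kim].
have [a [b <-]] := Xplus_span tX r.
have := torus2_subgroup_lie2 a b K_subgroup Kre Kim.
by rewrite /= linearD !linearZ /= -(decomp_re_row x_decomp) -(decomp_im_row x_decomp).
Qed.

Lemma torus2_subgroup_graph_offset n (H : set 'rV[RR]_n) x1 x2 :
  torus_subgroup H -> H x1 -> H x2 ->
  torus2_subgroup [set q | H (q.2 - lincomb x1 x2 q.1)].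
Proof.
move=> H_subgroup H1 H2; split.
- have offset_cont : continuous (fun q : 'rV[RR]_2 * 'rV[RR]_n => q.2 - lincomb x1 x2 q.1).
    move=> q; apply: (@continuousB RR 'rV[RR]_n _ snd (fun q => lincomb x1 x2 q.1) q).
      exact: cvg_snd.
    by apply: continuous_comp; [exact: cvg_fst | exact: lincomb_continuous].
  by case: H_subgroup => H_closed _ _; exact: (preimage_closed (fun q _ => offset_cont q)).
- move=> r u r_int u_int /=; apply: torus_subgroupB => //.
    by case: H_subgroup => _ Hint _; apply: Hint.
  exact: torus_subgroup_lincomb.
- move=> a b Ha Hb /=; rewrite linearB /=.
  have -> : a.2 - b.2 - (lincomb x1 x2 a.1 - lincomb x1 x2 b.1) =
            (a.2 - lincomb x1 x2 a.1) - (b.2 - lincomb x1 x2 b.1).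
    by rewrite !opprD !opprK addrACA.
  exact: torus_subgroupB.
Qed.

Lemma Ttx_graph_offset n (t : 'rV[CC]_2) (x : 'rV[CC]_n) x1 x2 q :
  decomp t x x1 x2 -> Ttx t x q -> Ta t x (q.2 - lincomb x1 x2 q.1).
Proof.
move=> x_decomp Tq; have [T1 T2] := Ta_decomp x_decomp.
apply: (Tq _ (torus2_subgroup_graph_offset (Ta_torus_subgroup t x) T1 T2)).
have Ta0 : Ta t x 0 by apply: torus_subgroup0; exact: Ta_torus_subgroup.
by apply/in_lieC_ReIm; split=> c /=;
  rewrite linearZ /= -?(decomp_re_row x_decomp) -?(decomp_im_row x_decomp) subrr.
Qed.

Lemma ev_continuous (X : topologicalType) : continuous (@ev X).
Proof.
move=> g A; rewrite nbhsE => -[B [B_open Bg] BA].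
apply: (@filterS _ _ _ [set h : loopT X | h @` [set 0] `<=` B]).
  by move=> h hB; apply/BA/hB; exists 0.
apply: open_nbhs_nbhs; split.
  exact: (compact_open_open (@compact_set1 'rV[RR]_2 0) B_open).
by move=> _ [_ -> <-].
Qed.

Lemma L2fix_comp n (X Y : topologicalType) (actX : 'rV[RR]_n -> X -> X)
    (actY : 'rV[RR]_n -> Y -> Y) (f : X -> Y) t x g :
  continuous f -> (forall u p, f (actX u p) = actY u (f p)) ->
  L2fix actX t x g -> L2fix actY t x (f \o g : loopT Y).
Proof.
move=> f_cont f_equiv [[g_cont g_per] g_fix]; split; first split.
- by move=> s; apply: continuous_comp; [exact: g_cont | exact: f_cont].
- by move=> s k k_int /=; rewrite g_per.
- move=> q Tq; apply: funext => s; rewrite /loop_act /= -f_equiv.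
  by have := congr1 (fun h : loopT X => h s) (g_fix q Tq); rewrite /loop_act /= => ->.
Qed.

Lemma loop_act_torus n (X : topologicalType) (act : 'rV[RR]_n -> X -> X) u g :
  loop_act act (0, u) g = act u \o g.
Proof. by apply: funext => s; rewrite /loop_act /= subr0. Qed.

Section TorusAction.
Variables (n : nat) (X : topologicalType) (act : 'rV[RR]_n -> X -> X).
Hypothesis act_torus : torus_action act.

Lemma act_continuous_comp (Z : topologicalType) (f : Z -> 'rV[RR]_n) (g : Z -> X) :
  continuous f -> continuous g -> continuous (fun z => act (f z) (g z)).
Proof.
case: act_torus => act_cont _ _ _ f_cont g_cont z.
apply: (@continuous_comp _ _ _ (fun z => (f z, g z)) (fun p => act p.1 p.2)).
  exact: (@cvg_pair _ _ _ (nbhs z) (nbhs (f z)) (nbhs (g z)) _ _ _ f g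
    (f_cont z) (g_cont z)).
exact: act_cont.
Qed.

Lemma act_continuous u : continuous (act u).
Proof.
apply: (@act_continuous_comp _ (fun _ => u) id); first exact: cst_continuous.
by move=> p; exact: cvg_id.
Qed.

Lemma act_comm u v p : act u (act v p) = act v (act u p).
Proof. by case: act_torus => _ _ actD _; rewrite -!actD addrC. Qed.

Lemma stabilizer_torus_subgroup p :
  hausdorff_space X -> torus_subgroup [set u | act u p = p].
Proof.
case: act_torus => _ _ actD act_int X_haus; split.
- have orbit_cont : continuous (act^~ p).
    apply: (@act_continuous_comp _ id (fun _ => p)); last exact: cst_continuous.
    by move=> u; exact: cvg_id.
  apply: (preimage_closed (fun u _ => orbit_cont u) (D := [set p])).
  exact/accessible_closed_set1/hausdorff_accessible.
- by move=> k k_int; apply: act_int.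
- by move=> u v /= up vp; rewrite -{1}vp -actD addrNK.
Qed.

End TorusAction.

Section FixedLoops.
Variables (n : nat) (X : topologicalType) (act : 'rV[RR]_n -> X -> X).
Variables (t : 'rV[CC]_2) (x : 'rV[CC]_n).
Hypothesis t_Xplus : Xplus t.

Lemma L2fixE x1 x2 g : decomp t x x1 x2 -> L2fix act t x g ->
  forall s, g s = act (lincomb x1 x2 s) (ev g).
Proof.
move=> x_decomp [_ g_fix] s.
have := congr1 (fun h : loopT X => h s) (g_fix _ (Ttx_graph t_Xplus x_decomp s)).
by rewrite /loop_act /= subrr.
Qed.

Lemma ev_L2fix_inj g g' : L2fix act t x g -> L2fix act t x g' -> ev g = ev g' -> g = g'.
Proof.
have [x1 [x2 x_decomp]] := Xplus_decomp x t_Xplus.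
move=> Lg Lg' gg'; apply: funext => s.
by rewrite (L2fixE x_decomp Lg) (L2fixE x_decomp Lg') gg'.
Qed.

Lemma ev_L2fix_fixed g : torus_action act -> hausdorff_space X ->
  L2fix act t x g -> fixed_pts act (Ta t x) (ev g).
Proof.
move=> act_torus X_haus Lg u Tu.
apply: (Tu _ (stabilizer_torus_subgroup act_torus (ev g) X_haus)) => y1 y2 y_decomp /=.
have [[_ g_per] _] := Lg.
have ev_delta j : ev g = g (delta_mx 0 j).
  by rewrite /ev -[delta_mx _ _]add0r g_per //; exact: integral_vec_delta.
rewrite {2}(ev_delta ord0) {3}(ev_delta ord_max) !(L2fixE y_decomp Lg).
by rewrite lincomb_delta0 lincomb_delta1.
Qed.

Definition orbit_loop x1 x2 (p : X) : loopT X := fun s => act (lincomb x1 x2 s) p.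

Lemma ev_orbit_loop x1 x2 p : torus_action act -> ev (orbit_loop x1 x2 p) = p.
Proof. by case=> _ act0 _ _; rewrite /ev /orbit_loop linear0 act0. Qed.

Lemma orbit_loop_L2fix x1 x2 p : torus_action act -> decomp t x x1 x2 ->
  fixed_pts act (Ta t x) p -> L2fix act t x (orbit_loop x1 x2 p).
Proof.
move=> act_torus x_decomp p_fix; have [T1 T2] := Ta_decomp x_decomp.
have [_ _ actD _] := act_torus.
split; first split.
- by apply: act_continuous_comp => //; [exact: lincomb_continuous | exact: cst_continuous].
- move=> s k k_int; rewrite /orbit_loop linearD /= actD p_fix //.
  exact: torus_subgroup_lincomb (Ta_torus_subgroup t x) _ _ _ T1 T2 k_int.
- move=> q Tq; apply: funext => s; rewrite /loop_act /orbit_loop /=.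
  by rewrite -actD linearB /= addrCA actD p_fix //; exact: Ttx_graph_offset.
Qed.

Lemma orbit_loop_continuous x1 x2 : torus_action act -> continuous (orbit_loop x1 x2).
Proof.
move=> act_torus; apply: (@continuous_curry_fun _ _ _ (fun q => act (lincomb x1 x2 q.2) q.1)).
apply: act_continuous_comp => //; last by move=> q; exact: cvg_fst.
by move=> q; apply: continuous_comp; [exact: cvg_snd | exact: lincomb_continuous].
Qed.

End FixedLoops.

Unset Implicit Arguments.

Theorem mainTheorem16 (n : nat) (X : topologicalType)
  (act : 'rV[RR]_n -> X -> X) (t : 'rV[CC]_2) (x : 'rV[CC]_n) :
  finite_TCW act -> Xplus t ->
  [/\ [/\ (* ev restricts to a map L^2X^{t,x} -> X^a ... *)
      forall g, L2fix act t x g -> fixed_pts act (Ta t x) (ev g),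
      (* ... which is injective ... *)
      forall g g', L2fix act t x g -> L2fix act t x g' -> ev g = ev g' -> g = g',
      (* ... continuous ... *)
      {within L2fix act t x, continuous (@ev X)} &
      (* ... with a continuous inverse: a homeomorphism *)
      exists h : X -> loopT X,
        (forall p, fixed_pts act (Ta t x) p -> L2fix act t x (h p) /\ ev (h p) = p)
        /\ {within fixed_pts act (Ta t x), continuous h}],
      (* naturality in X *)
      forall (Y : topologicalType) (actY : 'rV[RR]_n -> Y -> Y) (f : X -> Y),
        finite_TCW actY -> continuous f ->
        (forall u p, f (act u p) = actY u (f p)) ->
        forall g, L2fix act t x g ->
          L2fix actY t x ((f \o g) : loopT Y) /\ ev ((f \o g) : loopT Y) = f (ev g)
    & (* equivariance along nu : T/T(a) -> (𝕋^2 x T)/T(t,x), [u] |-> [(0,u)] *)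
      forall u g, L2fix act t x g ->
        L2fix act t x (loop_act act (0, u) g) /\
        ev (loop_act act (0, u) g) = act u (ev g)].
Proof.
move=> [act_torus X_haus _] t_Xplus.
have [x1 [x2 x_decomp]] := Xplus_decomp x t_Xplus.
split; first split.
- by move=> g; apply: ev_L2fix_fixed.
- exact: ev_L2fix_inj.
- exact/continuous_subspaceT/ev_continuous.
- exists (orbit_loop act x1 x2); split.
    by move=> p p_fix; split; [exact: orbit_loop_L2fix | exact: ev_orbit_loop].
  exact/continuous_subspaceT/orbit_loop_continuous.
- by move=> Y actY f _ f_cont f_equiv g Lg; split; [exact: L2fix_comp |].
- move=> u g Lg; rewrite loop_act_torus; split=> //.
  by apply: L2fix_comp Lg; [exact: act_continuous | exact: act_comm].
Qed.
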